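(* For $k\ge1$ let $\Delta^k=\{\mathbf{x}\in\mathbb{R}^k:x_i\ge0,\ \sum_i x_i\le1\}$ and define $g:\Delta^k\to\mathbb{R}$ by $$g(\mathbf{x})=-\sum_i x_i\ln x_i+\sum_i(1-x_i)\ln(1-x_i)-2\Big(1-\sum_i x_i\Big)\ln\Big(1-\sum_i x_i\Big)$$ (with $0\ln 0=0$). Then $g$ is concave on $\Delta^k$, and in the interior of $\Delta^k$, $$\frac{\partial g}{\partial x_i}=\ln\left(\frac{(1-\sum_j x_j)^2}{x_i(1-x_i)}\right).$$ *)

(* classical reals. Vectors in R^k are functions nat -> R,
   only the coordinates 0..k-1 are used. *)
From Stdlib Require Import Reals.
Open Scope R_scope.

Fixpoint rsum (k : nat) (f : nat -> R) : R :=
  match k with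
  | O => 0
  | S n => rsum n f + f n
  end.

Definition xlnx (t : R) : R := if Req_EM_T t 0 then 0 else t * ln t.

Definition in_simplex (k : nat) (x : nat -> R) : Prop :=
  (forall i, (i < k)%nat -> 0 <= x i) /\ rsum k x <= 1.

Definition in_simplex_interior (k : nat) (x : nat -> R) : Prop :=
  (forall i, (i < k)%nat -> 0 < x i) /\ rsum k x < 1.

Definition g (k : nat) (x : nat -> R) : R :=
  - rsum k (fun i => xlnx (x i))
  + rsum k (fun i => xlnx (1 - x i))
  - 2 * xlnx (1 - rsum k x).

Definition upd (x : nat -> R) (i : nat) (s : R) : nat -> R :=
  fun j => if Nat.eqb j i then s else x j.

From Stdlib Require Import Reals Lra Lia FunctionalExtensionality.
From Coquelicot Require Import Coquelicot.
Open Scope R_scope.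

(* Along a line z(s) = p + s q, g is a signed sum of "atoms" xlnx(a + b s).
   Differentiating twice gives the directional derivatives
     dg  = sum_j q_j (2 ln S - ln z_j - ln (1 - z_j))            (first),
     d2g = sum_j q_j^2/(1-z_j) - sum_j q_j^2/z_j - 2 W^2/S,  W = sum q_j.
   The heart of the proof is the inequality d2g <= 0 (Lemma d2g_nonpos).
   If every z_j <= 1/2 it holds term by term.  Otherwise one coordinate z_m
   exceeds 1/2; writing 1/a - 1/(1-a) = 1/hw a with hw a = a(1-a)/(1-2a),
   the positive m-th term is controlled by Sedrakyan's (Cauchy-Schwarz)
   inequality for the superadditive weights hw applied to the remaining
   coordinates and to S.  Degenerate coordinates (z_j = 0 with q_j = 0) are
   handled through Stdlib's convention x / 0 = 0.
   Concavity then follows from a one-variable criterion (nonpositive second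
   derivative implies lying above the chord) applied on segments of the
   simplex, and the gradient formula is dg in a coordinate direction. *)

(** * Finite sums *)

Lemma rsum_ext k f h : (forall i, (i < k)%nat -> f i = h i) -> rsum k f = rsum k h.
Proof.
  induction k as [|k IH]; simpl; intros H; [reflexivity|].
  rewrite IH by (intros; apply H; lia). rewrite H by lia. reflexivity.
Qed.

Lemma rsum_plus k f h : rsum k (fun i => f i + h i) = rsum k f + rsum k h.
Proof. induction k as [|k IH]; simpl; [ring|]. rewrite IH; ring. Qed.

Lemma rsum_scal k c f : rsum k (fun i => c * f i) = c * rsum k f.
Proof. induction k as [|k IH]; simpl; [ring|]. rewrite IH; ring. Qed.

Lemma rsum_opp k f : rsum k (fun i => - f i) = - rsum k f.
Proof. induction k as [|k IH]; simpl; [ring|]. rewrite IH; ring. Qed.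

Lemma rsum_minus k f h : rsum k (fun i => f i - h i) = rsum k f - rsum k h.
Proof. induction k as [|k IH]; simpl; [ring|]. rewrite IH; ring. Qed.

Lemma rsum_affine k p q t : rsum k (fun j => p j + q j * t) = rsum k p + rsum k q * t.
Proof. induction k as [|k IH]; simpl; [ring|]. rewrite IH; ring. Qed.

Lemma rsum_mul_add1 k c L :
  rsum k (fun j => c j * (L j + 1)) = rsum k (fun j => c j * L j) + rsum k c.
Proof. induction k as [|k IH]; simpl; [ring|]. rewrite IH; ring. Qed.

Lemma rsum_nonneg k f : (forall i, (i < k)%nat -> 0 <= f i) -> 0 <= rsum k f.
Proof.
  induction k as [|k IH]; simpl; intros H; [lra|].
  assert (0 <= rsum k f) by (apply IH; intros; apply H; lia).
  assert (0 <= f k) by (apply H; lia). lra.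
Qed.

Lemma rsum_le k f h : (forall i, (i < k)%nat -> f i <= h i) -> rsum k f <= rsum k h.
Proof.
  induction k as [|k IH]; simpl; intros H; [lra|].
  assert (rsum k f <= rsum k h) by (apply IH; intros; apply H; lia).
  assert (f k <= h k) by (apply H; lia). lra.
Qed.

Lemma rsum_term k f i : (forall j, (j < k)%nat -> 0 <= f j) -> (i < k)%nat -> f i <= rsum k f.
Proof.
  induction k as [|k IH]; simpl; intros H Hi; [lia|].
  assert (0 <= rsum k f) by (apply rsum_nonneg; intros; apply H; lia).
  assert (0 <= f k) by (apply H; lia).
  destruct (Nat.eq_dec i k) as [->|Hne]; [lra|].
  assert (f i <= rsum k f) by (apply IH; [intros; apply H; lia|lia]). lra.
Qed.

Lemma rsum_zero k a r : (forall i, (i < k)%nat -> 0 <= a i) ->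
  (forall i, (i < k)%nat -> a i = 0 -> r i = 0) -> rsum k a = 0 -> rsum k r = 0.
Proof.
  induction k as [|k IH]; simpl; intros H0 H1 H2; [reflexivity|].
  assert (0 <= rsum k a) by (apply rsum_nonneg; intros; apply H0; lia).
  assert (0 <= a k) by (apply H0; lia).
  rewrite IH; [|intros; apply H0; lia|intros; apply H1; auto; lia|lra].
  rewrite H1; [ring|lia|lra].
Qed.

Lemma rsum_indicator k m c : (m < k)%nat -> rsum k (fun j => if Nat.eqb j m then c else 0) = c.
Proof.
  induction k as [|k IH]; simpl; intros Hm; [lia|].
  destruct (Nat.eq_dec m k) as [->|Hne].
  - rewrite Nat.eqb_refl, (rsum_ext k _ (fun j => 0 * c)).
    + rewrite rsum_scal. ring.
    + intros j Hj. destruct (Nat.eqb_spec j k); [lia|ring].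
  - rewrite IH by lia. destruct (Nat.eqb_spec k m); [lia|ring].
Qed.

Lemma rsum_skip k m F : (m < k)%nat ->
  rsum k (fun j => if Nat.eqb j m then 0 else F j) = rsum k F - F m.
Proof.
  intros Hm.
  rewrite (rsum_ext _ _ (fun j => F j - (if Nat.eqb j m then F m else 0))).
  - rewrite rsum_minus, rsum_indicator by exact Hm. reflexivity.
  - intros j _. destruct (Nat.eqb_spec j m) as [->|]; ring.
Qed.

Lemma exists_gt_half k (z : nat -> R) :
  (exists m, (m < k)%nat /\ 1/2 < z m) \/ (forall i, (i < k)%nat -> z i <= 1/2).
Proof.
  induction k as [|k [[m [Hm Hz]]|H]].
  - right; intros; lia.
  - left; exists m; split; [lia|exact Hz].
  - destruct (Rle_lt_dec (z k) (1/2)) as [Hk|Hk].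
    + right; intros i Hi. destruct (Nat.eq_dec i k) as [->|]; [exact Hk|apply H; lia].
    + left; exists k; split; [lia|exact Hk].
Qed.

(** * The key quadratic inequality *)

(* Stdlib's real division satisfies [x / 0 = 0]; the lemmas below lean on it
   to let degenerate coordinates contribute nothing. *)
Lemma div_nonneg a b : 0 <= a -> 0 <= b -> 0 <= a / b.
Proof.
  intros Ha Hb. destruct (Req_dec b 0) as [->|Hb'].
  - unfold Rdiv. rewrite Rinv_0. lra.
  - apply Rdiv_le_0_compat; lra.
Qed.

Lemma zero_sq_div b : 0 ^ 2 / b = 0.
Proof. unfold Rdiv. simpl. ring. Qed.

(* The weight with [1/a - 1/(1-a) = 1/hw a]. *)
Definition hw (a : R) : R := a * (1 - a) / (1 - 2 * a).

Lemma hw_pos a : 0 < a < 1/2 -> 0 < hw a.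
Proof. intros H. unfold hw. apply Rdiv_lt_0_compat; nra. Qed.

Lemma hw_superadditive a b : 0 <= a -> 0 <= b -> a + b < 1/2 -> hw a + hw b <= hw (a + b).
Proof.
  intros Ha Hb Hab.
  assert (E : hw (a + b) - hw a - hw b =
     2 * a * b * (1 - a - b) / ((1 - 2*a - 2*b) * (1 - 2*a) * (1 - 2*b))).
  { unfold hw. field. repeat split; lra. }
  assert (0 <= 2 * a * b * (1 - a - b) / ((1 - 2*a - 2*b) * (1 - 2*a) * (1 - 2*b))).
  { apply div_nonneg.
    - apply Rmult_le_pos; [apply Rmult_le_pos|]; lra.
    - apply Rmult_le_pos; [apply Rmult_le_pos|]; lra. }
  lra.
Qed.

Lemma sedrakyan2 r s F G : 0 < F -> 0 < G -> (r + s) ^ 2 / (F + G) <= r ^ 2 / F + s ^ 2 / G.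
Proof.
  intros HF HG.
  assert (E : r ^ 2 / F + s ^ 2 / G - (r + s) ^ 2 / (F + G)
              = (r * G - s * F) ^ 2 / (F * G * (F + G))) by (field; lra).
  assert (0 <= (r * G - s * F) ^ 2 / (F * G * (F + G))).
  { apply div_nonneg; [apply pow2_ge_0|]. apply Rmult_le_pos; [apply Rmult_le_pos|]; lra. }
  lra.
Qed.

Lemma sedrakyan2_hw a b r s : 0 <= a -> 0 <= b -> a + b < 1/2 ->
  (a = 0 -> r = 0) -> (b = 0 -> s = 0) ->
  (r + s) ^ 2 / hw (a + b) <= r ^ 2 / hw a + s ^ 2 / hw b.
Proof.
  intros Ha Hb Hab Hr Hs.
  destruct (Req_dec a 0) as [->|Ea].
  { rewrite Hr, Rplus_0_l, Rplus_0_l, zero_sq_div by reflexivity. lra. }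
  destruct (Req_dec b 0) as [->|Eb].
  { rewrite Hs, Rplus_0_r, Rplus_0_r, zero_sq_div by reflexivity. lra. }
  assert (Fa : 0 < hw a) by (apply hw_pos; lra).
  assert (Fb : 0 < hw b) by (apply hw_pos; lra).
  assert (Fs := hw_superadditive a b Ha Hb Hab).
  eapply Rle_trans; [|apply sedrakyan2; assumption].
  unfold Rdiv. apply Rmult_le_compat_l; [apply pow2_ge_0|].
  apply Rinv_le_contravar; lra.
Qed.

Lemma sedrakyan_hw k a r : (forall i, (i < k)%nat -> 0 <= a i) ->
  (forall i, (i < k)%nat -> a i = 0 -> r i = 0) -> rsum k a < 1/2 ->
  rsum k r ^ 2 / hw (rsum k a) <= rsum k (fun i => r i ^ 2 / hw (a i)).
Proof.
  induction k as [|k IH]; simpl; intros H0 H1 H2.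
  - rewrite zero_sq_div. lra.
  - assert (0 <= rsum k a) by (apply rsum_nonneg; intros; apply H0; lia).
    assert (0 <= a k) by (apply H0; lia).
    eapply Rle_trans; [apply sedrakyan2_hw; [lra|lra|lra| |]|].
    + apply rsum_zero; [intros; apply H0; lia|intros; apply H1; auto; lia].
    + apply H1; lia.
    + apply Rplus_le_compat_r, IH; [intros; apply H0; lia|intros; apply H1; auto; lia|lra].
Qed.

Lemma hw_inv_gap a c : 0 <= a < 1/2 -> (a = 0 -> c = 0) ->
  c ^ 2 / (1 - a) = c ^ 2 / a - c ^ 2 / hw a.
Proof.
  intros Ha Hc. destruct (Req_dec a 0) as [->|Ea].
  - rewrite Hc, !zero_sq_div by reflexivity. ring.
  - unfold hw. field. repeat split; lra.
Qed.

(* Below 1/2, [1/hw S <= 2/S]: bounds the contribution of the last coordinate [S]. *)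
Lemma hw_sq_le S W : 0 <= S < 1/2 -> (S = 0 -> W = 0) -> W ^ 2 / hw S <= 2 * W ^ 2 / S.
Proof.
  intros HS HW. destruct (Req_dec S 0) as [ES|ES].
  - rewrite (HW ES), zero_sq_div, ES. unfold Rdiv. rewrite Rinv_0. lra.
  - replace (W ^ 2 / hw S) with (W ^ 2 / S * ((1 - 2 * S) / (1 - S)))
      by (unfold hw; field; repeat split; lra).
    replace (2 * W ^ 2 / S) with (W ^ 2 / S * 2) by (field; lra).
    apply Rmult_le_compat_l; [apply div_nonneg; [apply pow2_ge_0|lra]|].
    apply (Rmult_le_reg_r (1 - S)); [lra|].
    unfold Rdiv. rewrite Rmult_assoc, Rinv_l by lra. lra.
Qed.

(* The second directional derivative of [g] at [z] in direction [q]. *)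
Definition d2g (k : nat) (z q : nat -> R) : R :=
  rsum k (fun j => q j ^ 2 / (1 - z j)) - rsum k (fun j => q j ^ 2 / z j)
  - 2 * rsum k q ^ 2 / (1 - rsum k z).

(* If every coordinate is at most 1/2, the claim holds term by term. *)
Lemma d2g_nonpos_balanced k z q :
  (forall i, (i < k)%nat -> 0 <= z i <= 1/2 /\ (z i = 0 -> q i = 0)) ->
  0 <= 1 - rsum k z -> d2g k z q <= 0.
Proof.
  intros Hz HS. unfold d2g.
  assert (rsum k (fun i => q i ^ 2 / (1 - z i)) <= rsum k (fun i => q i ^ 2 / z i)).
  { apply rsum_le. intros i Hi. destruct (Hz i Hi) as [Hzi Hq].
    destruct (Req_dec (z i) 0) as [E|E].
    - rewrite (Hq E), !zero_sq_div. lra.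
    - unfold Rdiv. apply Rmult_le_compat_l; [apply pow2_ge_0|].
      apply Rinv_le_contravar; lra. }
  assert (0 <= 2 * rsum k q ^ 2 / (1 - rsum k z)).
  { apply div_nonneg; [apply Rmult_le_pos; [lra|apply pow2_ge_0]|exact HS]. }
  lra.
Qed.

(* If coordinate [m] exceeds 1/2, its contribution [q_m^2/hw(1 - z_m)] is
   positive; since [1 - z_m] is the sum of the other [z_j] and of [S], it is
   dominated, by Sedrakyan's inequality, by the terms of the other
   coordinates together with the [S]-term. *)
Lemma d2g_nonpos_dominant k z q m :
  (forall i, (i < k)%nat -> 0 <= z i /\ (z i = 0 -> q i = 0)) ->
  (1 - z m = 0 -> q m = 0) ->
  0 <= 1 - rsum k z -> (1 - rsum k z = 0 -> rsum k q = 0) ->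
  (m < k)%nat -> 1/2 < z m -> d2g k z q <= 0.
Proof.
  intros Hz Hqm HS HW Hm Hzm. unfold d2g.
  set (S := 1 - rsum k z) in *. set (W := rsum k q) in *.
  set (a := fun j => if Nat.eqb j m then 0 else z j).
  set (r := fun j => if Nat.eqb j m then 0 else q j).
  assert (Ea : rsum k a + S = 1 - z m) by (unfold a, S; rewrite rsum_skip by exact Hm; ring).
  assert (Er : rsum k r = W - q m) by (apply rsum_skip; exact Hm).
  assert (Ha : forall i, (i < k)%nat -> 0 <= a i) by
    (intros i Hi; unfold a; destruct (Nat.eqb i m); [lra|apply Hz; exact Hi]).
  assert (Har : forall i, (i < k)%nat -> a i = 0 -> r i = 0) by
    (intros i Hi; unfold a, r; destruct (Nat.eqb i m); [auto|apply Hz; exact Hi]).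
  assert (HA : 0 <= rsum k a) by (apply rsum_nonneg; exact Ha).
  assert (Hsplit : forall i, (i < k)%nat -> q i ^ 2 / (1 - z i) =
     q i ^ 2 / z i
     + (- (r i ^ 2 / hw (a i)) + (if Nat.eqb i m then q m ^ 2 / hw (1 - z m) else 0))).
  { intros i Hi. unfold r, a. destruct (Nat.eqb_spec i m) as [->|Hne].
    - pose proof (hw_inv_gap (1 - z m) (q m) ltac:(lra) Hqm) as Hgap.
      replace (1 - (1 - z m)) with (z m) in Hgap by ring.
      rewrite zero_sq_div. lra.
    - assert (z i <= rsum k a).
      { replace (z i) with (a i) by (unfold a; destruct (Nat.eqb_spec i m); [lia|reflexivity]).
        apply rsum_term; assumption. }
      destruct (Hz i Hi) as [Hzi Hqi].
      rewrite (hw_inv_gap (z i) (q i) ltac:(lra) Hqi). ring. }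
  rewrite (rsum_ext _ _ _ Hsplit), !rsum_plus, rsum_opp, rsum_indicator by exact Hm.
  assert (Htail := sedrakyan_hw k a r Ha Har ltac:(lra)).
  assert (Hpair : (rsum k r + - W) ^ 2 / hw (rsum k a + S)
                  <= rsum k r ^ 2 / hw (rsum k a) + (- W) ^ 2 / hw S).
  { apply sedrakyan2_hw; [lra|lra|lra|apply rsum_zero; assumption|].
    intros E. rewrite (HW E). ring. }
  replace (rsum k a + S) with (1 - z m) in Hpair by lra.
  replace ((rsum k r + - W) ^ 2) with (q m ^ 2) in Hpair by (rewrite Er; ring).
  replace ((- W) ^ 2) with (W ^ 2) in Hpair by ring.
  assert (Hlast := hw_sq_le S W ltac:(lra) HW).
  lra.
Qed.

Definition pos_or_null (a da : R) : Prop := 0 < a \/ (a = 0 /\ da = 0).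

Lemma pos_or_null_spec a da : pos_or_null a da -> 0 <= a /\ (a = 0 -> da = 0).
Proof. intros [H|[H1 H2]]; split; intros; lra. Qed.

(* Moving from [z] in direction [q] keeps every quantity entering [g]
   (the [z j], the [1 - z j] and [1 - rsum k z]) nonnegative to first order. *)
Definition admissible (k : nat) (z q : nat -> R) : Prop :=
  (forall j, (j < k)%nat -> pos_or_null (z j) (q j) /\ pos_or_null (1 - z j) (- q j)) /\
  pos_or_null (1 - rsum k z) (- rsum k q).

Lemma d2g_nonpos k z q : admissible k z q -> d2g k z q <= 0.
Proof.
  intros [Hj HS].
  assert (Hz : forall i, (i < k)%nat -> 0 <= z i /\ (z i = 0 -> q i = 0))
    by (intros i Hi; apply pos_or_null_spec, (Hj i Hi)).
  assert (Hz1 : forall i, (i < k)%nat -> 1 - z i = 0 -> q i = 0).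
  { intros i Hi E. destruct (pos_or_null_spec _ _ (proj2 (Hj i Hi))) as [_ Hq].
    apply Hq in E. lra. }
  apply pos_or_null_spec in HS as [HS HW].
  destruct (exists_gt_half k z) as [[m [Hm Hzm]]|Hsmall].
  - apply (d2g_nonpos_dominant k z q m); auto.
    intros E. apply HW in E. lra.
  - apply d2g_nonpos_balanced; [|exact HS].
    intros i Hi. destruct (Hz i Hi). repeat split; auto.
Qed.

(** * The function [t ln t] *)

(* Stdlib's [ln] vanishes on nonpositive reals, so the convention [0 ln 0 = 0]
   makes [xlnx] coincide with [t * ln t] everywhere. *)
Lemma xlnx_eq t : xlnx t = t * ln t.
Proof. unfold xlnx. destruct (Req_EM_T t 0) as [->|_]; [ring|reflexivity]. Qed.

Lemma xlnx_nonpos v : v <= 0 -> xlnx v = 0.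
Proof.
  intros Hv. rewrite xlnx_eq. unfold ln.
  destruct (Rlt_dec 0 v); [exfalso; lra|ring].
Qed.

Lemma is_derive_xlnx v : 0 < v -> is_derive xlnx v (ln v + 1).
Proof.
  intros Hv. apply (is_derive_ext (fun s => s * ln s)); [intros; symmetry; apply xlnx_eq|].
  auto_derive; [exact Hv|]. field. lra.
Qed.

(* [|v ln v| <= 2 sqrt v] on (0,1), from [ln u <= u - 1] at [u = 1 / sqrt v]. *)
Lemma xlnx_small v : 0 < v < 1 -> Rabs (xlnx v) <= 2 * sqrt v.
Proof.
  intros Hv. rewrite xlnx_eq.
  set (s := sqrt v).
  assert (Hs : 0 < s) by (apply sqrt_lt_R0; lra).
  assert (Hss : s * s = v) by (apply sqrt_sqrt; lra).
  assert (Hl : ln v = 2 * ln s) by (rewrite <- Hss, ln_mult by exact Hs; ring).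
  assert (Hb : - ln s <= / s - 1).
  { rewrite <- ln_Rinv by exact Hs.
    pose proof (exp_ineq1_le (ln (/ s))) as E.
    rewrite exp_ln in E by (apply Rinv_0_lt_compat, Hs). lra. }
  assert (Hn : ln s < 0) by (rewrite <- ln_1; apply ln_increasing; nra).
  rewrite Hl, <- Hss, Rabs_left by nra.
  assert (s * s * (/ s - 1) = s - s * s) by (field; lra).
  nra.
Qed.

Lemma xlnx_continuous_0 : continuity_pt xlnx 0.
Proof.
  apply continuity_pt_locally. intros eps.
  assert (Heps : 0 < eps) by apply cond_pos.
  assert (Hd : 0 < Rmin 1 (eps / 2 * (eps / 2))) by (apply Rmin_pos; nra).
  exists (mkposreal _ Hd). intros s Hs.
  unfold ball in Hs; simpl in Hs. unfold AbsRing_ball, abs, minus, plus, opp in Hs; simpl in Hs.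
  rewrite Ropp_0, Rplus_0_r in Hs. apply Rabs_def2 in Hs.
  pose proof (Rmin_l 1 (eps / 2 * (eps / 2))). pose proof (Rmin_r 1 (eps / 2 * (eps / 2))).
  rewrite (xlnx_nonpos 0), Rminus_0_r by lra.
  destruct (Rle_dec s 0) as [Hs0|Hs0].
  - rewrite xlnx_nonpos, Rabs_R0 by exact Hs0. exact Heps.
  - pose proof (xlnx_small s ltac:(lra)) as Hb.
    assert (Hss : sqrt s * sqrt s = s) by (apply sqrt_sqrt; lra).
    pose proof (sqrt_pos s).
    assert (sqrt s < eps / 2) by nra.
    lra.
Qed.

Lemma xlnx_continuous v : continuity_pt xlnx v.
Proof.
  destruct (Rtotal_order v 0) as [Hv|[->|Hv]].
  - (* [xlnx] vanishes near a negative point *)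
    apply continuity_pt_locally. intros eps.
    eapply filter_imp; [|exact (open_lt 0 v Hv)].
    intros s Hs. rewrite !xlnx_nonpos by lra. rewrite Rminus_0_r, Rabs_R0. apply cond_pos.
  - exact xlnx_continuous_0.
  - apply derivable_continuous_pt. exists (ln v + 1). apply is_derive_Reals, is_derive_xlnx, Hv.
Qed.

(** * Derivatives of [g] along a line *)

Definition line (p q : nat -> R) (s : R) : nat -> R := fun j => p j + q j * s.

Definition grad_g (k : nat) (z : nat -> R) (j : nat) : R :=
  2 * ln (1 - rsum k z) - ln (z j) - ln (1 - z j).

(* The first directional derivative of [g] at [z] in direction [q]. *)
Definition dg (k : nat) (z q : nat -> R) : R := rsum k (fun j => q j * grad_g k z j).

(* Along a line, [g], [dg] and [d2g] are built from affine "atoms" [p + q s]. *)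
Lemma compl_affine a b s : 1 - (a + b * s) = (1 - a) + - b * s.
Proof. ring. Qed.

Lemma g_line_atoms k p q s : g k (line p q s) =
  - rsum k (fun j => xlnx (p j + q j * s))
  + rsum k (fun j => xlnx ((1 - p j) + - q j * s))
  - 2 * xlnx ((1 - rsum k p) + - rsum k q * s).
Proof.
  unfold g, line. rewrite rsum_affine, compl_affine.
  rewrite (rsum_ext k (fun i => xlnx (1 - (p i + q i * s))) (fun j => xlnx ((1 - p j) + - q j * s)))
    by (intros; rewrite compl_affine; reflexivity).
  reflexivity.
Qed.

Lemma dg_line_atoms k p q s : dg k (line p q s) q =
  - rsum k (fun j => q j * ln (p j + q j * s))
  + rsum k (fun j => - q j * ln ((1 - p j) + - q j * s))
  - 2 * (- rsum k q * ln ((1 - rsum k p) + - rsum k q * s)).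
Proof.
  unfold dg, grad_g, line. rewrite rsum_affine, compl_affine.
  set (L := ln ((1 - rsum k p) + - rsum k q * s)).
  rewrite (rsum_ext k _ (fun j => 2 * L * q j
      + (- (q j * ln (p j + q j * s)) + - q j * ln ((1 - p j) + - q j * s)))).
  - rewrite rsum_plus, rsum_scal, rsum_plus, rsum_opp. ring.
  - intros j _. rewrite compl_affine. ring.
Qed.

Lemma d2g_line k p q s : d2g k (line p q s) q =
  - rsum k (fun j => q j ^ 2 / (p j + q j * s))
  + rsum k (fun j => (- q j) ^ 2 / ((1 - p j) + - q j * s))
  - 2 * ((- rsum k q) ^ 2 / ((1 - rsum k p) + - rsum k q * s)).
Proof.
  unfold d2g, line. rewrite rsum_affine, compl_affine.
  rewrite (rsum_ext k (fun j => q j ^ 2 / (1 - (p j + q j * s)))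
                      (fun j => (- q j) ^ 2 / ((1 - p j) + - q j * s)))
    by (intros; rewrite compl_affine; f_equal; ring).
  replace ((- rsum k q) ^ 2) with (rsum k q ^ 2) by ring.
  unfold Rdiv. ring.
Qed.

(* Derivatives of the atoms; an atom that is not positive is identically zero. *)
Lemma is_derive_xlnx_affine p q t : pos_or_null (p + q * t) q ->
  is_derive (fun s => xlnx (p + q * s)) t (q * (ln (p + q * t) + 1)).
Proof.
  intros [H|[H0 ->]].
  - apply (is_derive_comp xlnx (fun s => p + q * s)); [apply is_derive_xlnx, H|].
    auto_derive; [exact I|ring].
  -
    apply (is_derive_ext (fun _ => 0)).
    + intros s. rewrite xlnx_nonpos; lra.
    + rewrite Rmult_0_l. apply (is_derive_const 0).
Qed.

Lemma is_derive_ln_affine p q t : pos_or_null (p + q * t) q ->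
  is_derive (fun s => q * ln (p + q * s)) t (q ^ 2 / (p + q * t)).
Proof.
  intros [H|[H0 ->]].
  - auto_derive; [exact H|]. field. lra.
  - apply (is_derive_ext (fun _ => 0)).
    + intros s. symmetry. apply Rmult_0_l.
    + rewrite zero_sq_div. apply (is_derive_const 0).
Qed.

Lemma xlnx_affine_continuous p q t : continuity_pt (fun s => xlnx (p + q * s)) t.
Proof.
  apply (continuity_pt_comp (fun s => p + q * s) xlnx); [|apply xlnx_continuous].
  apply derivable_continuous_pt. exists q. apply is_derive_Reals. auto_derive; [exact I|ring].
Qed.

Lemma is_derive_rsum k (F : nat -> R -> R) dF t :
  (forall j, (j < k)%nat -> is_derive (F j) t (dF j)) ->
  is_derive (fun s => rsum k (fun j => F j s)) t (rsum k dF).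
Proof.
  induction k as [|k IH]; simpl; intros H.
  - apply (is_derive_const 0).
  - apply (is_derive_plus (fun s => rsum k (fun j => F j s))); [apply IH; intros; apply H; lia|].
    apply H; lia.
Qed.

Lemma continuity_pt_rsum k (F : nat -> R -> R) t :
  (forall j, continuity_pt (F j) t) -> continuity_pt (fun s => rsum k (fun j => F j s)) t.
Proof.
  induction k as [|k IH]; simpl; intros H.
  - apply continuity_pt_const. intros a b. reflexivity.
  - apply continuity_pt_plus; [apply IH, H|apply H].
Qed.

(* All three line formulas share the shape [- rsum A + rsum B - 2 C]. *)
Lemma is_derive_combination k (A B : nat -> R -> R) (C : R -> R) dA dB dC t :
  (forall j, (j < k)%nat -> is_derive (A j) t (dA j)) ->
  (forall j, (j < k)%nat -> is_derive (B j) t (dB j)) ->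
  is_derive C t dC ->
  is_derive (fun s => - rsum k (fun j => A j s) + rsum k (fun j => B j s) - 2 * C s) t
            (- rsum k dA + rsum k dB - 2 * dC).
Proof.
  intros HA HB HC. unfold Rminus.
  apply (is_derive_plus (fun s => - rsum k (fun j => A j s) + rsum k (fun j => B j s))).
  - apply (is_derive_plus (fun s => - rsum k (fun j => A j s))); [|apply is_derive_rsum, HB].
    apply (is_derive_opp (fun s => rsum k (fun j => A j s))), is_derive_rsum, HA.
  - apply (is_derive_opp (fun s => 2 * C s)), (is_derive_scal C), HC.
Qed.

Lemma is_derive_g_line k p q t : admissible k (line p q t) q ->
  is_derive (fun s => g k (line p q s)) t (dg k (line p q t) q).
Proof.
  intros [Hj HS]. unfold line in Hj, HS. rewrite rsum_affine, compl_affine in HS.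
  apply (is_derive_ext _ _ _ _ (fun s => eq_sym (g_line_atoms k p q s))).
  replace (dg k (line p q t) q) with
    (- rsum k (fun j => q j * (ln (p j + q j * t) + 1))
     + rsum k (fun j => - q j * (ln ((1 - p j) + - q j * t) + 1))
     - 2 * (- rsum k q * (ln ((1 - rsum k p) + - rsum k q * t) + 1))).
  - apply is_derive_combination; [| |apply is_derive_xlnx_affine, HS];
      intros j Hj'; apply is_derive_xlnx_affine; [apply Hj, Hj'|].
    rewrite <- compl_affine. apply Hj, Hj'.
  - (* the constant parts cancel since [rsum k (- q) = - rsum k q] *)
    rewrite dg_line_atoms, !rsum_mul_add1, rsum_opp. ring.
Qed.

Lemma is_derive_dg_line k p q t : admissible k (line p q t) q ->
  is_derive (fun s => dg k (line p q s) q) t (d2g k (line p q t) q).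
Proof.
  intros [Hj HS]. unfold line in Hj, HS. rewrite rsum_affine, compl_affine in HS.
  apply (is_derive_ext _ _ _ _ (fun s => eq_sym (dg_line_atoms k p q s))).
  rewrite d2g_line.
  apply is_derive_combination; [| |apply is_derive_ln_affine, HS];
    intros j Hj'; apply is_derive_ln_affine; [apply Hj, Hj'|].
  rewrite <- compl_affine. apply Hj, Hj'.
Qed.

Lemma g_line_continuous k p q t : continuity_pt (fun s => g k (line p q s)) t.
Proof.
  apply (continuity_pt_ext _ _ _ (fun s => eq_sym (g_line_atoms k p q s))).
  apply continuity_pt_minus; [apply continuity_pt_plus|].
  - apply continuity_pt_opp, continuity_pt_rsum. intros; apply xlnx_affine_continuous.
  - apply continuity_pt_rsum. intros; apply xlnx_affine_continuous.
  - apply continuity_pt_scal, xlnx_affine_continuous.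
Qed.

(** * A one-variable concavity criterion *)

Lemma mvt_open f df a b : a < b -> (forall c, a < c < b -> is_derive f c (df c)) ->
  (forall c, a <= c <= b -> continuity_pt f c) ->
  exists c, a < c < b /\ f b - f a = df c * (b - a).
Proof.
  intros Hab Hd Hc.
  pose (pr := fun c (P : a < c < b) => exist (fun l => derivable_pt_abs f c l) (df c)
                  (proj1 (is_derive_Reals _ _ _) (Hd c P))).
  destruct (MVT f id a b pr (fun c _ => derivable_pt_id c) Hab Hc
              (fun c _ => derivable_continuous_pt _ _ (derivable_pt_id c))) as [c [P E]].
  exists c. split; [exact P|].
  rewrite derive_pt_id in E. simpl in E. unfold id in E. lra.
Qed.

Lemma concave_of_second_derivative f f1 f2 t : 0 <= t <= 1 ->
  (forall c, 0 <= c <= 1 -> continuity_pt f c) ->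
  (forall c, 0 < c < 1 -> is_derive f c (f1 c)) ->
  (forall c, 0 < c < 1 -> is_derive f1 c (f2 c)) ->
  (forall c, 0 < c < 1 -> f2 c <= 0) ->
  t * f 1 + (1 - t) * f 0 <= f t.
Proof.
  intros Ht Hc Hd1 Hd2 Hneg.
  destruct (Req_dec t 0) as [->|Ht0]; [lra|].
  destruct (Req_dec t 1) as [->|Ht1]; [lra|].
  destruct (mvt_open f f1 0 t) as [c1 [Hc1 E1]];
    [lra|intros; apply Hd1; lra|intros; apply Hc; lra|].
  destruct (mvt_open f f1 t 1) as [c2 [Hc2 E2]];
    [lra|intros; apply Hd1; lra|intros; apply Hc; lra|].
  destruct (mvt_open f1 f2 c1 c2) as [c [Hc3 E3]]; [lra|intros; apply Hd2; lra| |].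
  { intros c Hc'. apply derivable_continuous_pt. exists (f2 c). apply is_derive_Reals, Hd2. lra. }
  (* the slope [f1] decreases from [c1] to [c2] *)
  assert (f2 c <= 0) by (apply Hneg; lra).
  assert (Hslope : f1 c2 <= f1 c1) by nra.
  assert (0 <= t * (1 - t) * (f1 c1 - f1 c2)) by (apply Rmult_le_pos; [apply Rmult_le_pos|]; lra).
  assert (t * f 1 + (1 - t) * f 0 - f t = - (t * (1 - t) * (f1 c1 - f1 c2))).
  { replace (f 1) with (f t + f1 c2 * (1 - t)) by lra.
    replace (f 0) with (f t - f1 c1 * (t - 0)) by lra. ring. }
  lra.
Qed.

(** * Concavity of [g] and its gradient *)

Lemma pos_or_null_between a b s : 0 <= a -> 0 <= b -> 0 < s < 1 ->
  pos_or_null (a + (b - a) * s) (b - a).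
Proof.
  intros Ha Hb Hs. unfold pos_or_null.
  destruct (Req_dec a 0) as [->|Ea]; destruct (Req_dec b 0) as [->|Eb];
    [right; split; ring|left; nra|left; nra|left; nra].
Qed.

Lemma segment_admissible k x y s : in_simplex k x -> in_simplex k y -> 0 < s < 1 ->
  admissible k (line y (fun j => x j - y j) s) (fun j => x j - y j).
Proof.
  intros [Hx0 Hx1] [Hy0 Hy1] Hs. unfold line. split.
  - intros j Hj. split.
    + apply pos_or_null_between; auto.
    + rewrite compl_affine. replace (- (x j - y j)) with ((1 - x j) - (1 - y j)) by ring.
      apply pos_or_null_between; [| |exact Hs].
      * pose proof (rsum_term k y j Hy0 Hj). lra.
      * pose proof (rsum_term k x j Hx0 Hj). lra.
  - rewrite rsum_affine, compl_affine, rsum_minus.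
    replace (- (rsum k x - rsum k y)) with ((1 - rsum k x) - (1 - rsum k y)) by ring.
    apply pos_or_null_between; [lra|lra|exact Hs].
Qed.

(* Concavity: on a segment of the simplex, [g] has nonpositive second derivative. *)
Theorem g_concave k (x y : nat -> R) (t : R) :
  in_simplex k x -> in_simplex k y -> 0 <= t <= 1 ->
  t * g k x + (1 - t) * g k y <= g k (fun j => t * x j + (1 - t) * y j).
Proof.
  intros Hx Hy Ht.
  set (q := fun j => x j - y j).
  assert (Hline : forall s, line y q s = fun j => s * x j + (1 - s) * y j)
    by (intros s; apply functional_extensionality; intros j; unfold line, q; ring).
  assert (Hchord : t * g k (line y q 1) + (1 - t) * g k (line y q 0) <= g k (line y q t)).
  { apply (concave_of_second_derivative (fun s => g k (line y q s))
             (fun s => dg k (line y q s) q) (fun s => d2g k (line y q s) q) t Ht).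
    - intros; apply g_line_continuous.
    - intros c Hc. apply is_derive_g_line, segment_admissible; assumption.
    - intros c Hc. apply is_derive_dg_line, segment_admissible; assumption.
    - intros c Hc. apply d2g_nonpos, segment_admissible; assumption. }
  rewrite !Hline in Hchord.
  replace (fun j => 1 * x j + (1 - 1) * y j) with x in Hchord
    by (apply functional_extensionality; intros; ring).
  replace (fun j => 0 * x j + (1 - 0) * y j) with y in Hchord
    by (apply functional_extensionality; intros; ring).
  exact Hchord.
Qed.

Lemma interior_admissible k x q : in_simplex_interior k x -> admissible k x q.
Proof.
  intros [Hx0 Hx1]. split; [|left; lra].
  intros j Hj. split; left; [exact (Hx0 j Hj)|].
  pose proof (rsum_term k x j (fun i Hi => Rlt_le _ _ (Hx0 i Hi)) Hj). lra.
Qed.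

Theorem g_partial_derivative k (x : nat -> R) (i : nat) :
  in_simplex_interior k x -> (i < k)%nat ->
  derivable_pt_lim (fun s => g k (upd x i s)) (x i)
    (ln ((1 - rsum k x) ^ 2 / (x i * (1 - x i)))).
Proof.
  intros Hx Hi.
  (* moving the [i]-th coordinate is moving along the line through [x] in direction [e_i] *)
  set (e := fun j => if Nat.eqb j i then 1 else 0).
  set (p := fun j => x j - e j * x i).
  assert (Hupd : forall s, upd x i s = line p e s).
  { intros s. apply functional_extensionality. intros j.
    unfold upd, line, p, e. destruct (Nat.eqb_spec j i) as [->|]; ring. }
  assert (Hx_line : line p e (x i) = x).
  { rewrite <- Hupd. apply functional_extensionality. intros j.
    unfold upd. destruct (Nat.eqb_spec j i) as [->|]; reflexivity. }
  apply is_derive_Reals.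
  apply (is_derive_ext (fun s => g k (line p e s))); [intros s; rewrite Hupd; reflexivity|].
  replace (ln ((1 - rsum k x) ^ 2 / (x i * (1 - x i)))) with (dg k (line p e (x i)) e).
  { apply is_derive_g_line. rewrite Hx_line. apply interior_admissible, Hx. }
  (* the directional derivative along [e_i] is the [i]-th gradient component *)
  rewrite Hx_line. unfold dg.
  rewrite (rsum_ext k _ (fun j => if Nat.eqb j i then grad_g k x i else 0)).
  2: { intros j _. unfold e. destruct (Nat.eqb_spec j i) as [->|]; ring. }
  rewrite rsum_indicator by exact Hi.
  destruct Hx as [Hx0 Hx1].
  assert (0 < x i) by (apply Hx0, Hi).
  assert (x i < 1)
    by (pose proof (rsum_term k x i (fun j Hj => Rlt_le _ _ (Hx0 j Hj)) Hi); lra).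
  unfold grad_g.
  rewrite ln_div, ln_mult, ln_pow by (try apply pow_lt; try apply Rmult_lt_0_compat; lra).
  simpl INR. ring.
Qed.

Theorem mainTheorem8 (k : nat) (hk : (1 <= k)%nat) :
  (forall (x y : nat -> R) (t : R),
      in_simplex k x -> in_simplex k y -> 0 <= t <= 1 ->
      t * g k x + (1 - t) * g k y
        <= g k (fun j => t * x j + (1 - t) * y j))
  /\
  (forall (x : nat -> R) (i : nat),
      in_simplex_interior k x -> (i < k)%nat ->
      derivable_pt_lim (fun s => g k (upd x i s)) (x i)
        (ln ((1 - rsum k x) ^ 2 / (x i * (1 - x i))))).
Proof.
  split; [exact (g_concave k)|exact (g_partial_derivative k)].
Qed.
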